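(* For $R=\mathbb{Z}_{25}$ and for $R=\mathbb{S}_5=\mathbb{F}_5[X]/(X^2)$ there exist projective arcs with parameters $(425,18)$ and $(455,19)$ in $\mathrm{PHG}(2,R)$.
   Context: For a finite chain ring $R$ of length $2$ with residue field $\mathbb{F}_q$, the projective Hjelmslev plane $\mathrm{PHG}(2,R)$ is the incidence structure whose points are the free rank-$1$ submodules of the right module $R_R^3$, whose lines are the free rank-$2$ submodules of $R_R^3$, with incidence given by inclusion. A projective $(k,n)$-arc is a set of $k$ points meeting every line in at most $n$ points. *)

From HB Require Import structures.
From mathcomp Require Import all_boot all_order all_algebra.
From mathcomp Require Import ring.
Set Implicit Arguments. Unset Strict Implicit. Unset Printing Implicit Defensive.
Import GRing.Theory.
Local Open Scope ring_scope.

(* ---------- The dual numbers F[X]/(X^2), represented as a + bX ~ (a,b) ---- *)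
Definition dual (F : Type) : Type := (F * F)%type.
HB.instance Definition _ (F : finType) := Finite.copy (dual F) (F * F)%type.
HB.instance Definition _ (F : zmodType) := GRing.Zmodule.copy (dual F) (F * F)%type.

Section Dual.
Variable F : comNzRingType.
Definition dual_one : dual F := (1, 0).
Definition dual_mul (x y : dual F) : dual F :=
  (x.1 * y.1, x.1 * y.2 + x.2 * y.1).
Fact dual_mulA : associative dual_mul.
Proof. by move=> [a b] [c d] [e f]; rewrite /dual_mul /=; congr pair; ring. Qed.
Fact dual_mulC : commutative dual_mul.
Proof. by move=> [a b] [c d]; rewrite /dual_mul /=; congr pair; ring. Qed.
Fact dual_mul1 : left_id dual_one dual_mul.
Proof. by move=> [a b]; rewrite /dual_mul /= mul1r mul0r mul1r addr0. Qed.
Fact dual_mulDl : left_distributive dual_mul +%R.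
Proof.
move=> [a b] [c d] [e f]; rewrite /dual_mul /=.
transitivity ((a * e + c * e, (a * f + b * e) + (c * f + d * e)) : dual F); last by [].
by congr pair; ring.
Qed.
Fact dual_one_neq0 : dual_one != 0.
Proof. by apply/negP=> /eqP[] /eqP; rewrite oner_eq0. Qed.
HB.instance Definition _ := GRing.Zmodule_isComNzRing.Build (dual F)
  dual_mulA dual_mulC dual_mul1 dual_mulDl dual_one_neq0.
End Dual.

Section DualFin.
Variable F : finComNzRingType.
HB.instance Definition _ := GRing.ComNzRing.on (dual F).
End DualFin.

Definition S5 : finComNzRingType := dual 'F_5.
Definition Z25 : finComNzRingType := 'Z_25.

Definition free_submod_rank (R : finComNzRingType) (k : nat)
    (S : {set 'rV[R]_3}) : Prop :=
  exists B : 'M[R]_(k, 3),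
    injective (fun c : 'rV[R]_k => c *m B) /\ S = [set c *m B | c : 'rV[R]_k].

Definition PHG_point (R : finComNzRingType) (S : {set 'rV[R]_3}) : Prop :=
  free_submod_rank 1 S.
Definition PHG_line (R : finComNzRingType) (S : {set 'rV[R]_3}) : Prop :=
  free_submod_rank 2 S.

(* A projective (k,n)-arc: a set of k points meeting every line (incidence =
   inclusion) in at most n points. *)
Definition proj_arc (R : finComNzRingType) (A : {set {set 'rV[R]_3}})
    (k n : nat) : Prop :=
  [/\ (forall p, p \in A -> PHG_point p),
      #|A| = k &
      (forall L : {set 'rV[R]_3}, PHG_line L ->
         #|[set p in A | p \subset L]| <= n)%N].

From mathcomp Require Import all_boot all_order all_algebra.
From mathcomp Require Import ring.
Set Implicit Arguments. Unset Strict Implicit. Unset Printing Implicit Defensive.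
Import GRing.Theory.

(* Fix t != 0 in R such that every element of R is a unit or is killed by t
   (in a chain ring of length 2, a generator of the maximal ideal), and call a
   triple normalized when its first coordinate not killed by t equals 1.
   Distinct normalized triples span distinct points.  A line of PHG(2,R), the
   row space of a free basis B, lies in the kernel of x |-> x . l, where l is a
   normalized multiple of the cross product of the rows of B: freeness forbids
   t from killing every 2x2 minor of B, so this cross product has a unit
   coordinate.  Hence the points of a list V of distinct normalized triples
   form a projective (|V|, n)-arc as soon as every normalized l is orthogonal
   to at most n members of V, a finite condition decided by evaluation. *)

Section Triples.
Local Open Scope ring_scope.
Variable R : comNzRingType.
Implicit Types (a b : R) (x y : R * R * R).

Definition row3 x : 'rV[R]_3 := \row_k [:: x.1.1; x.1.2; x.2]`_k.
Definition triple (r : 'rV[R]_3) : R * R * R := (r 0 0, r 0 1, r 0 2).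
Definition scale3 a x : R * R * R := (a * x.1.1, a * x.1.2, a * x.2).
Definition dot3 x y : R := x.1.1 * y.1.1 + x.1.2 * y.1.2 + x.2 * y.2.

Lemma row3K : cancel row3 triple.
Proof. by case=> [[a b] c]; rewrite /triple !mxE. Qed.

Lemma row3_inj : injective row3. Proof. exact: can_inj row3K. Qed.

Lemma mul_row3 (c : 'rV[R]_1) x : c *m row3 x = row3 (scale3 (c 0 0) x).
Proof.
rewrite [c]mx11_scalar mul_scalar_mx mxE; apply/rowP => k; rewrite !mxE.
by case: k => -[|[|[|]]].
Qed.

Lemma scale3_inj x : [\/ x.1.1 = 1, x.1.2 = 1 | x.2 = 1] ->
  injective (scale3^~ x).
Proof.
case: x => [[x1 x2] x3] /= has1 a b [ax1 ax2 ax3].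
by case: has1 => xE; [move: ax1 | move: ax2 | move: ax3]; rewrite xE !mulr1.
Qed.

Lemma scale3_1 x : scale3 1 x = x.
Proof. by case: x => [[x1 x2] x3]; rewrite /scale3 !mul1r. Qed.

Lemma dot3_scaler a x y : dot3 x (scale3 a y) = a * dot3 x y.
Proof. rewrite /dot3 /=; ring. Qed.

Definition row2 a b : 'rV[R]_2 := \row_i [:: a; b]`_i.

Lemma row2_eq0 a b : (row2 a b == 0) = (a == 0) && (b == 0).
Proof.
apply/eqP/andP => [/rowP ab0 | [/eqP-> /eqP->]].
  by move: (ab0 0) (ab0 1); rewrite !mxE /= => -> ->; rewrite eqxx.
by apply/rowP => i; rewrite !mxE; case: i => -[|[|]].
Qed.

Lemma mulmx2E (c : 'rV[R]_2) (B : 'M[R]_(2,3)) k :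
  (c *m B) 0 k = c 0 0 * B 0 k + c 0 1 * B 1 k.
Proof.
rewrite mxE !big_ord_recl big_ord0 addr0.
by have -> : lift ord0 ord0 = 1 :> 'I_2 by apply: val_inj.
Qed.

Lemma mul_row2 a b (B : 'M[R]_(2,3)) k : (row2 a b *m B) 0 k = a * B 0 k + b * B 1 k.
Proof. by rewrite mulmx2E !mxE. Qed.

Definition cross (B : 'M[R]_(2,3)) : R * R * R :=
  (B 0 1 * B 1 2 - B 0 2 * B 1 1, B 0 2 * B 1 0 - B 0 0 * B 1 2,
   B 0 0 * B 1 1 - B 0 1 * B 1 0).

Lemma dot3_cross (c : 'rV[R]_2) B : dot3 (triple (c *m B)) (cross B) = 0.
Proof. rewrite /dot3 /= !mulmx2E; ring. Qed.

Lemma ord3_cases (k : 'I_3) : [\/ k = 0, k = 1 | k = 2].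
Proof.
by case: k => -[|[|[|]]] // ?; [constructor 1|constructor 2|constructor 3]; apply: val_inj.
Qed.

End Triples.

Section NormalForms.
Local Open Scope ring_scope.
Variables (R : comNzRingType) (t : R).
Hypothesis t_neq0 : t != 0.
Hypothesis unit_or_tmul0 : forall a : R, (exists b, a * b = 1) \/ t * a = 0.
Implicit Types (a b : R) (x : R * R * R).

Definition normalized x : bool :=
  [|| x.1.1 == 1, (t * x.1.1 == 0) && (x.1.2 == 1)
    | [&& t * x.1.1 == 0, t * x.1.2 == 0 & x.2 == 1]].

Lemma unit_tmul_neq0 a b : a * b = 1 -> t * a != 0.
Proof.
move=> ab1; apply: contraNneq t_neq0 => ta0.
by rewrite -[t]mulr1 -ab1 mulrA ta0 mul0r.
Qed.

Lemma normalized_has1 x : normalized x -> [\/ x.1.1 = 1, x.1.2 = 1 | x.2 = 1].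
Proof. by case/or3P => [/eqP|/andP[_ /eqP]|/and3P[_ _ /eqP]]; constructor. Qed.

Lemma normalized_scale3 a x : normalized x -> normalized (scale3 a x) -> a = 1.
Proof.
have noinv b c : t * b = 0 -> b * c = 1 -> False.
  by move=> tb0 /unit_tmul_neq0; rewrite tb0 eqxx.
have ta0 c : t * (a * c) = 0 -> c = 1 -> t * a = 0 by move=> + c1; rewrite c1 mulr1.
case: x => [[x1 x2] x3]; rewrite /normalized /=.
case/or3P => [/eqP x1E | /andP[/eqP tx1 /eqP x2E] | /and3P[/eqP tx1 /eqP tx2 /eqP x3E]];
case/or3P => [/eqP ax1 | /andP[/eqP tax1 /eqP ax2] | /and3P[/eqP tax1 /eqP tax2 /eqP ax3]].
- by rewrite -ax1 x1E mulr1.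
- by case: (noinv a x2 (ta0 _ tax1 x1E)).
- by case: (noinv a x3 (ta0 _ tax1 x1E)).
- by case: (noinv x1 a tx1); rewrite mulrC.
- by rewrite -ax2 x2E mulr1.
- by case: (noinv a x3 (ta0 _ tax2 x2E)).
- by case: (noinv x1 a tx1); rewrite mulrC.
- by case: (noinv x2 a tx2); rewrite mulrC.
- by rewrite -ax3 x3E mulr1.
Qed.

Lemma normalize x : scale3 t x != 0 -> exists a, normalized (scale3 a x).
Proof.
case: x => [[x1 x2] x3]; rewrite /normalized /= => tx_neq0.
have [[a x1a] | tx1] := unit_or_tmul0 x1; first by exists a; rewrite mulrC x1a eqxx.
have [[a x2a] | tx2] := unit_or_tmul0 x2.
  by exists a; rewrite mulrCA tx1 mulr0 (mulrC a x2) x2a !eqxx orbT.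
have [[a x3a] | tx3] := unit_or_tmul0 x3.
  by exists a; rewrite !(mulrCA t) tx1 tx2 !mulr0 (mulrC a x3) x3a !eqxx !orbT.
by move: tx_neq0; rewrite /scale3 /= tx1 tx2 tx3 eqxx.
Qed.

Lemma cross_tmul_neq0 (B : 'M[R]_(2,3)) :
  injective (fun c : 'rV[R]_2 => c *m B) -> scale3 t (cross B) != 0.
Proof.
move=> injB; apply/negP; rewrite /scale3 /= !xpair_eqE => /andP[/andP[/eqP t12 /eqP t20] /eqP t01].
have tminor0 j k : t * (B 0 j * B 1 k - B 0 k * B 1 j) = 0.
  by case: (ord3_cases j) => ->; case: (ord3_cases k) => ->;
     rewrite ?subrr ?mulr0 // -opprB mulrN ?t12 ?t20 ?t01 oppr0.
suff [c c_neq0 cB0] : exists2 c : 'rV[R]_2, c != 0 & c *m B = 0.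
  by move/eqP: c_neq0; apply; apply: injB; rewrite /= cB0 mul0mx.
(* A column of B not killed by t yields the kernel vector t (-B_1j, B_0j);
   if t kills all of B, then (t, 0) is a kernel vector. *)
case: (pickP (fun j => (t * B 0 j != 0) || (t * B 1 j != 0))) => [j tBj | tB0].
  exists (row2 (- (t * B 1 j)) (t * B 0 j)).
    by rewrite row2_eq0 oppr_eq0 andbC negb_and.
  by apply/rowP => k; rewrite mul_row2 mxE -(tminor0 j k); ring.
exists (row2 t 0); first by rewrite row2_eq0 negb_and t_neq0.
apply/rowP => k; rewrite mul_row2 mxE mul0r addr0.
by move/norP: (tB0 k) => [/negbNE/eqP].
Qed.

End NormalForms.

Section Arcs.
Local Open Scope ring_scope.
Variables (R : finComNzRingType) (t : R).
Hypothesis t_neq0 : t != 0.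
Hypothesis unit_or_tmul0 : forall a : R, (exists b, a * b = 1) \/ t * a = 0.
Implicit Types (x y l : R * R * R).

Definition pt x : {set 'rV[R]_3} := [set c *m row3 x | c : 'rV[R]_1].

Lemma mem_pt x : row3 x \in pt x.
Proof. by apply/imsetP; exists 1%:M; rewrite ?mul1mx. Qed.

Lemma pt_scale3 x y : row3 y \in pt x -> exists a, y = scale3 a x.
Proof. by case/imsetP => c _; rewrite mul_row3 => /row3_inj ->; exists (c 0 0). Qed.

Lemma PHG_point_pt x : [\/ x.1.1 = 1, x.1.2 = 1 | x.2 = 1] -> PHG_point (pt x).
Proof.
move=> has1; exists (row3 x); split=> // c c'.
rewrite /= !mul_row3 => /row3_inj /(scale3_inj has1) c00.
by apply/rowP => i; rewrite ord1.
Qed.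

Lemma normalized_pt_inj x y :
  normalized t x -> normalized t y -> pt x = pt y -> x = y.
Proof.
move=> nx ny ptxy; have /pt_scale3[a yE] : row3 y \in pt x by rewrite ptxy mem_pt.
have a1 : a = 1 by apply: (normalized_scale3 t_neq0 nx); rewrite -yE.
by rewrite yE a1 scale3_1.
Qed.

Lemma PHG_line_normal L : PHG_line L ->
  exists2 l, normalized t l & forall x, row3 x \in L -> dot3 x l = 0.
Proof.
case=> B [injB ->]; have [a nl] := normalize unit_or_tmul0 (cross_tmul_neq0 t_neq0 injB).
exists (scale3 a (cross B)) => // x /imsetP[c _ xE].
by rewrite -[x]row3K xE dot3_scaler dot3_cross mulr0.
Qed.

Lemma proj_arc_normalized (V : seq (R * R * R)) n :
  uniq V -> all (normalized t) V ->
  (forall l, normalized t l -> count (fun v => dot3 v l == 0%R) V <= n)%N ->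
  proj_arc [set pt v | v in V] (size V) n.
Proof.
move=> uV /allP nV countV; split.
- by move=> _ /imsetP[v /nV /normalized_has1 v1 ->]; apply: PHG_point_pt.
- rewrite card_in_imset; first exact/card_uniqP.
  by move=> x y /nV nx /nV ny; apply: normalized_pt_inj.
move=> L /PHG_line_normal[l nl lL]; apply: leq_trans (countV l nl).
rewrite -size_filter; apply: leq_trans (card_size _).
apply: leq_trans (leq_imset_card pt _); apply: subset_leq_card.
apply/subsetP => p; rewrite inE => /andP[/imsetP[v vV ->] ptL].
by apply/imsetP; exists v; rewrite // mem_filter vV lL ?eqxx // (subsetP ptL) ?mem_pt.
Qed.

End Arcs.

Section Decision.
Local Open Scope ring_scope.
Variables (R : finComNzRingType) (t : R) (elts : seq R).
Hypothesis mem_elts : forall a : R, a \in elts.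
Implicit Types (v l : R * R * R).

Definition local_check : bool :=
  (t != 0) && all (fun a => has (fun b => a * b == 1) elts || (t * a == 0)) elts.

Lemma local_checkP : local_check ->
  t != 0 /\ forall a, (exists b, a * b = 1) \/ t * a = 0.
Proof.
case/andP => -> /allP loc; split=> // a.
by case/orP: (loc a (mem_elts a)) => [/hasP[b _ /eqP] | /eqP]; [left; exists b | right].
Qed.

Definition normal_forms : seq (R * R * R) :=
  let tker := [seq a <- elts | t * a == 0] in
  [seq (1, a, b) | a <- elts, b <- elts] ++ [seq (a, 1, b) | a <- tker, b <- elts]
  ++ [seq (a, b, 1) | a <- tker, b <- tker].

Lemma mem_normal_forms l : normalized t l -> l \in normal_forms.
Proof.
have tker a : t * a == 0 -> a \in [seq a <- elts | t * a == 0].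
  by rewrite mem_filter mem_elts andbT.
case: l => [[a b] c]; rewrite /normalized !mem_cat /=.
case/or3P => [/eqP-> | /andP[ta /eqP->] | /and3P[ta tb /eqP->]].
- by apply/orP; left; apply/allpairsP; exists (b, c); rewrite !mem_elts.
- by apply/orP; right; apply/orP; left; apply/allpairsP; exists (a, c); rewrite tker ?mem_elts.
- by apply/orP; right; apply/orP; right; apply/allpairsP; exists (a, b); rewrite !tker.
Qed.

Definition mul_rows v : seq R * seq R * seq R :=
  ([seq v.1.1 * a | a <- elts], [seq v.1.2 * a | a <- elts], [seq v.2 * a | a <- elts]).

Definition elt_index l : nat * nat * nat :=
  (index l.1.1 elts, index l.1.2 elts, index l.2 elts).

Definition dot_rows (w : seq R * seq R * seq R) (c : nat * nat * nat) : R :=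
  w.1.1`_c.1.1 + w.1.2`_c.1.2 + w.2`_c.2.

Lemma dot_rowsE v l : dot_rows (mul_rows v) (elt_index l) = dot3 v l.
Proof. by rewrite /dot_rows /= !(nth_map 0) ?index_mem ?mem_elts // !nth_index ?mem_elts. Qed.

(* Each v is replaced once and for all by the products of its coordinates
   with all elements of R, so that testing v . l = 0 needs no multiplication. *)
Definition arc_check (V : seq (R * R * R)) (n : nat) : bool :=
  let W := map mul_rows V in
  [&& uniq V, all (normalized t) V &
      all (fun l => let c := elt_index l in
                    count (fun w => dot_rows w c == 0%R) W <= n)%N normal_forms].

Lemma proj_arc_check V n :
  local_check -> arc_check V n -> exists A, @proj_arc R A (size V) n.
Proof.
case/local_checkP => t_neq0 loc /and3P[uV nV /allP countV].
exists [set pt v | v in V]; apply: (proj_arc_normalized t_neq0 loc uV nV) => l.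
have countE : count (fun w => dot_rows w (elt_index l) == 0) (map mul_rows V) =
              count (fun v => dot3 v l == 0) V.
  by rewrite count_map; apply: eq_count => v /=; rewrite dot_rowsE.
by move=> /mem_normal_forms /countV /=; rewrite countE.
Qed.

End Decision.

Section Base5.
Local Open Scope ring_scope.
Variable R : comNzRingType.
Implicit Types (t : R) (m k : nat).

Definition of_base5 t k : R := (k %% 5)%:R + (k %/ 5)%:R * t.
Definition base5_elts t : seq R := map (of_base5 t) (iota 0 25).
Definition decode3 t (x : nat * nat * nat) : R * R * R :=
  (of_base5 t x.1.1, of_base5 t x.1.2, of_base5 t x.2).

Lemma of_base5_digits t m k : (m < 5)%N -> of_base5 t (m + 5 * k) = m%:R + k%:R * t.
Proof.
by move=> m5; rewrite /of_base5 addnC mulnC modnMDl modn_small // divnMDl // divn_small ?addn0.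
Qed.

Lemma of_base5_natr k : of_base5 5%:R k = k%:R.
Proof. by rewrite /of_base5 -natrM -natrD addnC -divn_eq. Qed.

End Base5.

Lemma proj_arc_base5 (R : finComNzRingType) (t : R) (V : seq (nat * nat * nat)) n :
  (forall a : R, a \in base5_elts t) -> local_check t (base5_elts t) ->
  arc_check t (base5_elts t) (map (decode3 t) V) n -> exists A, @proj_arc R A (size V) n.
Proof. by rewrite -(size_map (decode3 t)) => mem_elts; apply: proj_arc_check. Qed.

Section DualNumbers.
Local Open Scope ring_scope.
Variable F : comNzRingType.

Lemma natr_dual n : n%:R = (n%:R, 0) :> dual F.
Proof.
elim: n => // n IH; rewrite !mulrS IH.
by change ((1 + n%:R, 0 + 0) = (1 + n%:R, 0) :> dual F); rewrite addr0.
Qed.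

Lemma dual_pairE (a b : F) :
  ((a, 0) : dual F) + ((b, 0) : dual F) * ((0, 1) : dual F) = (a, b).
Proof.
change ((a + b * 0, 0 + (b * 1 + 0 * 0)) = (a, b) :> dual F).
by rewrite mulr0 mulr1 mul0r !addr0 add0r.
Qed.

End DualNumbers.

Section Instances.
Local Open Scope ring_scope.

Definition S5X : S5 := (0, 1).

Lemma mem_base5_Z25 (a : Z25) : a \in base5_elts 5%:R.
Proof.
apply/mapP; exists (val a); first by rewrite mem_iota; exact: ltn_ord.
by rewrite of_base5_natr natr_Zp.
Qed.

Lemma mem_base5_S5 (x : S5) : x \in base5_elts S5X.
Proof.
case: x => a b; have a5 : (a < 5)%N := ltn_ord a; have b5 : (b < 5)%N := ltn_ord b.
apply/mapP; exists (a + 5 * b)%N.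
  by rewrite mem_iota add0n ltnS; apply: leq_add (ltnSE a5) (leq_mul (leqnn 5) (ltnSE b5)).
by rewrite of_base5_digits // !natr_dual /S5X dual_pairE !natr_Zp.
Qed.

End Instances.

(* Coordinates are written in base 5: k = a + 5 b stands for a + b t, where
   t = 5 in Z25 and t = X in S5. *)
Definition arc_Z25_425 : seq (nat * nat * nat) := [::
  (0,0,1); (0,1,0); (0,1,5); (0,1,7); (0,1,9); (0,1,13); (0,1,14); (0,1,16);
  (0,1,18); (0,1,19); (0,1,21); (0,1,22); (0,1,23); (0,1,24); (0,5,1);
  (0,10,1); (0,15,1); (0,20,1); (1,0,1); (1,0,3); (1,0,7); (1,0,9); (1,0,11);
  (1,0,12); (1,0,17); (1,0,18); (1,0,19); (1,0,20); (1,0,21); (1,0,22);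
  (1,0,23); (1,0,24); (1,1,0); (1,1,9); (1,1,12); (1,1,13); (1,1,14); (1,1,19);
  (1,1,20); (1,1,23); (1,1,24); (1,2,2); (1,2,4); (1,2,5); (1,2,7); (1,2,10);
  (1,2,11); (1,2,13); (1,2,15); (1,2,16); (1,2,17); (1,2,18); (1,2,21);
  (1,2,22); (1,2,24); (1,3,3); (1,3,4); (1,3,5); (1,3,6); (1,3,7); (1,3,8);
  (1,3,12); (1,3,14); (1,3,15); (1,3,16); (1,3,17); (1,3,18); (1,3,20);
  (1,3,24); (1,4,0); (1,4,4); (1,4,5); (1,4,6); (1,4,7); (1,4,8); (1,4,11);
  (1,4,12); (1,4,16); (1,4,17); (1,4,19); (1,4,21); (1,4,22); (1,4,24);
  (1,5,1); (1,5,2); (1,5,3); (1,5,4); (1,5,5); (1,5,6); (1,5,7); (1,5,12);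
  (1,5,14); (1,5,16); (1,5,18); (1,5,22); (1,5,23); (1,5,24); (1,6,0); (1,6,1);
  (1,6,6); (1,6,9); (1,6,11); (1,6,13); (1,6,14); (1,6,16); (1,6,19); (1,6,20);
  (1,6,21); (1,6,22); (1,6,23); (1,6,24); (1,7,1); (1,7,2); (1,7,5); (1,7,6);
  (1,7,9); (1,7,10); (1,7,11); (1,7,12); (1,7,13); (1,7,14); (1,7,15);
  (1,7,17); (1,7,18); (1,7,22); (1,8,1); (1,8,3); (1,8,4); (1,8,5); (1,8,8);
  (1,8,9); (1,8,12); (1,8,15); (1,8,16); (1,8,17); (1,8,18); (1,8,19);
  (1,8,20); (1,8,22); (1,9,1); (1,9,2); (1,9,4); (1,9,5); (1,9,7); (1,9,9);
  (1,9,10); (1,9,11); (1,9,16); (1,9,17); (1,9,18); (1,9,21); (1,9,22);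
  (1,9,24); (1,10,2); (1,10,3); (1,10,4); (1,10,6); (1,10,9); (1,10,11);
  (1,10,12); (1,10,15); (1,10,17); (1,10,18); (1,10,19); (1,10,21); (1,10,22);
  (1,10,23); (1,11,0); (1,11,7); (1,11,9); (1,11,13); (1,11,14); (1,11,19);
  (1,11,20); (1,11,23); (1,11,24); (1,12,1); (1,12,5); (1,12,7); (1,12,10);
  (1,12,12); (1,12,13); (1,12,15); (1,12,16); (1,12,17); (1,12,18); (1,12,19);
  (1,12,21); (1,12,22); (1,12,24); (1,13,1); (1,13,2); (1,13,3); (1,13,5);
  (1,13,8); (1,13,9); (1,13,11); (1,13,14); (1,13,15); (1,13,17); (1,13,18);
  (1,13,20); (1,13,22); (1,13,24); (1,14,1); (1,14,2); (1,14,3); (1,14,4);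
  (1,14,6); (1,14,7); (1,14,9); (1,14,10); (1,14,12); (1,14,14); (1,14,15);
  (1,14,16); (1,14,17); (1,14,21); (1,15,0); (1,15,1); (1,15,2); (1,15,3);
  (1,15,7); (1,15,9); (1,15,11); (1,15,12); (1,15,14); (1,15,16); (1,15,17);
  (1,15,18); (1,15,23); (1,15,24); (1,16,0); (1,16,1); (1,16,6); (1,16,9);
  (1,16,11); (1,16,13); (1,16,14); (1,16,16); (1,16,17); (1,16,19); (1,16,20);
  (1,16,21); (1,16,23); (1,16,24); (1,17,2); (1,17,4); (1,17,5); (1,17,6);
  (1,17,7); (1,17,9); (1,17,10); (1,17,11); (1,17,12); (1,17,13); (1,17,15);
  (1,17,16); (1,17,17); (1,17,18); (1,18,2); (1,18,3); (1,18,4); (1,18,5);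
  (1,18,7); (1,18,8); (1,18,11); (1,18,14); (1,18,15); (1,18,18); (1,18,19);
  (1,18,20); (1,18,21); (1,18,22); (1,19,1); (1,19,2); (1,19,6); (1,19,9);
  (1,19,11); (1,19,12); (1,19,13); (1,19,14); (1,19,15); (1,19,17); (1,19,19);
  (1,19,20); (1,19,21); (1,19,22); (1,20,2); (1,20,3); (1,20,4); (1,20,6);
  (1,20,7); (1,20,10); (1,20,14); (1,20,16); (1,20,17); (1,20,18); (1,20,19);
  (1,20,21); (1,20,22); (1,20,23); (1,21,0); (1,21,1); (1,21,2); (1,21,6);
  (1,21,9); (1,21,11); (1,21,13); (1,21,14); (1,21,16); (1,21,19); (1,21,20);
  (1,21,21); (1,21,23); (1,21,24); (1,22,1); (1,22,2); (1,22,5); (1,22,6);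
  (1,22,7); (1,22,10); (1,22,12); (1,22,13); (1,22,14); (1,22,15); (1,22,18);
  (1,22,19); (1,22,21); (1,22,22); (1,23,2); (1,23,3); (1,23,5); (1,23,6);
  (1,23,7); (1,23,8); (1,23,9); (1,23,12); (1,23,15); (1,23,18); (1,23,19);
  (1,23,20); (1,23,21); (1,23,24); (1,24,0); (1,24,1); (1,24,2); (1,24,6);
  (1,24,7); (1,24,11); (1,24,12); (1,24,14); (1,24,16); (1,24,19); (1,24,20);
  (1,24,22); (1,24,23); (1,24,24); (5,0,1); (5,1,0); (5,1,1); (5,1,3); (5,1,4);
  (5,1,5); (5,1,7); (5,1,8); (5,1,9); (5,1,13); (5,1,14); (5,1,21); (5,1,22);
  (5,1,24); (5,5,1); (5,10,1); (5,15,1); (5,20,1); (10,1,0); (10,1,1);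
  (10,1,3); (10,1,4); (10,1,5); (10,1,6); (10,1,7); (10,1,14); (10,1,18);
  (10,1,19); (10,1,22); (10,1,23); (10,1,24); (15,0,1); (15,1,0); (15,1,4);
  (15,1,5); (15,1,6); (15,1,7); (15,1,8); (15,1,9); (15,1,11); (15,1,13);
  (15,1,14); (15,1,18); (15,1,19); (15,1,22); (15,5,1); (15,10,1); (15,15,1);
  (15,20,1); (20,0,1); (20,1,0); (20,1,3); (20,1,4); (20,1,5); (20,1,7);
  (20,1,8); (20,1,9); (20,1,11); (20,1,16); (20,1,19); (20,1,22); (20,1,23);
  (20,1,24); (20,5,1); (20,10,1); (20,15,1); (20,20,1)].

Definition arc_Z25_455 : seq (nat * nat * nat) := [::
  (0,1,0); (0,1,1); (0,1,2); (0,1,5); (0,1,6); (0,1,7); (0,1,10); (0,1,11);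
  (0,1,12); (0,1,15); (0,1,16); (0,1,17); (0,1,18); (0,1,19); (0,1,20);
  (0,1,21); (0,1,22); (0,1,23); (0,1,24); (1,0,1); (1,0,2); (1,0,5); (1,0,6);
  (1,0,7); (1,0,8); (1,0,9); (1,0,11); (1,0,13); (1,0,15); (1,0,16); (1,0,17);
  (1,0,18); (1,0,21); (1,0,22); (1,0,23); (1,1,0); (1,1,1); (1,1,2); (1,1,4);
  (1,1,6); (1,1,7); (1,1,8); (1,1,9); (1,1,12); (1,1,14); (1,1,15); (1,1,19);
  (1,1,20); (1,1,21); (1,1,22); (1,1,24); (1,2,0); (1,2,3); (1,2,4); (1,2,5);
  (1,2,9); (1,2,10); (1,2,13); (1,2,14); (1,2,15); (1,2,17); (1,2,18);
  (1,2,19); (1,2,20); (1,2,21); (1,2,22); (1,2,23); (1,3,0); (1,3,1); (1,3,3);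
  (1,3,4); (1,3,5); (1,3,6); (1,3,7); (1,3,9); (1,3,10); (1,3,12); (1,3,13);
  (1,3,14); (1,3,18); (1,3,20); (1,3,22); (1,3,23); (1,4,0); (1,4,3); (1,4,9);
  (1,4,12); (1,4,13); (1,4,14); (1,4,15); (1,4,17); (1,4,18); (1,4,19);
  (1,4,24); (1,5,2); (1,5,3); (1,5,5); (1,5,7); (1,5,12); (1,5,13); (1,5,14);
  (1,5,17); (1,5,18); (1,5,20); (1,5,23); (1,6,0); (1,6,1); (1,6,2); (1,6,3);
  (1,6,5); (1,6,6); (1,6,7); (1,6,12); (1,6,20); (1,6,21); (1,6,22); (1,7,0);
  (1,7,1); (1,7,3); (1,7,4); (1,7,5); (1,7,8); (1,7,9); (1,7,10); (1,7,12);
  (1,7,13); (1,7,15); (1,7,17); (1,7,19); (1,7,20); (1,7,23); (1,7,24);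
  (1,8,1); (1,8,2); (1,8,3); (1,8,4); (1,8,5); (1,8,8); (1,8,10); (1,8,12);
  (1,8,15); (1,8,17); (1,8,18); (1,8,19); (1,8,20); (1,8,21); (1,8,23);
  (1,8,24); (1,9,1); (1,9,2); (1,9,4); (1,9,6); (1,9,7); (1,9,8); (1,9,10);
  (1,9,11); (1,9,14); (1,9,16); (1,9,18); (1,9,19); (1,9,20); (1,9,21);
  (1,9,23); (1,9,24); (1,10,1); (1,10,2); (1,10,3); (1,10,6); (1,10,8);
  (1,10,10); (1,10,11); (1,10,12); (1,10,16); (1,10,17); (1,10,18); (1,10,19);
  (1,10,20); (1,10,21); (1,10,22); (1,10,23); (1,11,0); (1,11,1); (1,11,2);
  (1,11,4); (1,11,5); (1,11,6); (1,11,7); (1,11,9); (1,11,10); (1,11,12);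
  (1,11,14); (1,11,19); (1,11,21); (1,11,22); (1,11,23); (1,11,24); (1,12,0);
  (1,12,5); (1,12,6); (1,12,7); (1,12,8); (1,12,9); (1,12,10); (1,12,12);
  (1,12,13); (1,12,14); (1,12,15); (1,12,18); (1,12,19); (1,12,20); (1,12,23);
  (1,12,24); (1,13,0); (1,13,3); (1,13,5); (1,13,7); (1,13,8); (1,13,9);
  (1,13,13); (1,13,14); (1,13,15); (1,13,16); (1,13,17); (1,13,19); (1,13,20);
  (1,13,21); (1,13,22); (1,13,23); (1,14,1); (1,14,3); (1,14,4); (1,14,5);
  (1,14,6); (1,14,9); (1,14,11); (1,14,13); (1,14,15); (1,14,16); (1,14,17);
  (1,14,19); (1,14,21); (1,14,22); (1,14,23); (1,14,24); (1,15,0); (1,15,1);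
  (1,15,2); (1,15,3); (1,15,6); (1,15,7); (1,15,8); (1,15,10); (1,15,11);
  (1,15,12); (1,15,13); (1,15,16); (1,15,21); (1,15,22); (1,15,23); (1,15,24);
  (1,16,1); (1,16,2); (1,16,4); (1,16,5); (1,16,6); (1,16,7); (1,16,9);
  (1,16,10); (1,16,12); (1,16,14); (1,16,15); (1,16,18); (1,16,19); (1,16,21);
  (1,16,22); (1,16,24); (1,17,2); (1,17,3); (1,17,4); (1,17,7); (1,17,8);
  (1,17,9); (1,17,11); (1,17,14); (1,17,18); (1,17,23); (1,17,24); (1,18,0);
  (1,18,2); (1,18,3); (1,18,4); (1,18,5); (1,18,8); (1,18,9); (1,18,10);
  (1,18,11); (1,18,12); (1,18,13); (1,18,15); (1,18,16); (1,18,18); (1,18,22);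
  (1,18,24); (1,19,0); (1,19,1); (1,19,3); (1,19,4); (1,19,6); (1,19,7);
  (1,19,8); (1,19,9); (1,19,10); (1,19,11); (1,19,12); (1,19,14); (1,19,16);
  (1,19,18); (1,19,21); (1,19,24); (1,20,0); (1,20,1); (1,20,3); (1,20,4);
  (1,20,6); (1,20,7); (1,20,8); (1,20,11); (1,20,12); (1,20,13); (1,20,15);
  (1,20,16); (1,20,17); (1,20,18); (1,20,21); (1,20,22); (1,21,1); (1,21,2);
  (1,21,4); (1,21,6); (1,21,7); (1,21,9); (1,21,10); (1,21,12); (1,21,13);
  (1,21,14); (1,21,15); (1,21,19); (1,21,20); (1,21,21); (1,21,22); (1,21,24);
  (1,22,0); (1,22,2); (1,22,3); (1,22,4); (1,22,5); (1,22,8); (1,22,10);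
  (1,22,13); (1,22,14); (1,22,15); (1,22,16); (1,22,18); (1,22,19); (1,22,20);
  (1,22,22); (1,22,24); (1,23,0); (1,23,2); (1,23,6); (1,23,7); (1,23,8);
  (1,23,10); (1,23,11); (1,23,13); (1,23,14); (1,23,15); (1,23,17); (1,23,18);
  (1,23,19); (1,23,20); (1,23,23); (1,23,24); (1,24,1); (1,24,2); (1,24,4);
  (1,24,5); (1,24,6); (1,24,8); (1,24,9); (1,24,11); (1,24,13); (1,24,14);
  (1,24,16); (1,24,19); (1,24,20); (1,24,21); (1,24,22); (1,24,23); (5,0,1);
  (5,1,0); (5,1,2); (5,1,5); (5,1,7); (5,1,10); (5,1,12); (5,1,14); (5,1,15);
  (5,1,17); (5,1,18); (5,1,19); (5,1,20); (5,1,22); (5,1,23); (5,5,1);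
  (5,10,1); (5,15,1); (5,20,1); (10,1,0); (10,1,1); (10,1,2); (10,1,5);
  (10,1,6); (10,1,7); (10,1,9); (10,1,10); (10,1,11); (10,1,12); (10,1,14);
  (10,1,15); (10,1,16); (10,1,17); (10,1,18); (10,1,20); (10,1,21); (10,1,22);
  (10,1,23); (15,0,1); (15,1,4); (15,1,9); (15,1,18); (15,1,23); (15,5,1);
  (15,10,1); (15,15,1); (15,20,1); (20,0,1); (20,1,4); (20,1,18); (20,1,23);
  (20,1,24); (20,5,1); (20,10,1); (20,15,1); (20,20,1)].

Definition arc_S5_425 : seq (nat * nat * nat) := [::
  (0,0,1); (0,5,1); (0,10,1); (0,20,1); (0,1,5); (0,1,10); (0,1,15); (0,1,20);
  (0,1,1); (0,1,16); (0,1,7); (0,1,17); (0,1,8); (0,1,18); (0,1,23); (0,1,4);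
  (0,1,19); (0,1,24); (5,0,1); (5,10,1); (5,15,1); (5,20,1); (5,1,5); (5,1,10);
  (5,1,15); (5,1,20); (5,1,1); (5,1,16); (5,1,2); (5,1,12); (5,1,8); (5,1,13);
  (5,1,23); (5,1,14); (5,1,19); (5,1,24); (10,0,1); (10,5,1); (10,10,1);
  (10,15,1); (10,1,5); (10,1,10); (10,1,15); (10,1,20); (10,1,1); (10,1,16);
  (10,1,7); (10,1,22); (10,1,3); (10,1,13); (10,1,23); (10,1,9); (10,1,14);
  (10,1,19); (15,0,1); (15,5,1); (15,15,1); (15,20,1); (15,1,5); (15,1,10);
  (15,1,15); (15,1,20); (15,1,1); (15,1,16); (15,1,2); (15,1,17); (15,1,3);
  (15,1,13); (15,1,18); (15,1,4); (15,1,9); (15,1,14); (20,5,1); (20,10,1);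
  (20,15,1); (20,20,1); (20,1,5); (20,1,10); (20,1,15); (20,1,20); (20,1,1);
  (20,1,16); (20,1,12); (20,1,22); (20,1,3); (20,1,8); (20,1,18); (20,1,4);
  (20,1,9); (20,1,24); (1,0,10); (1,0,20); (1,0,1); (1,0,6); (1,0,11);
  (1,0,16); (1,0,2); (1,0,7); (1,0,12); (1,0,17); (1,0,3); (1,0,8); (1,0,18);
  (1,0,23); (1,5,0); (1,5,10); (1,5,6); (1,5,11); (1,5,16); (1,5,21); (1,5,2);
  (1,5,7); (1,5,17); (1,5,22); (1,5,3); (1,5,8); (1,5,18); (1,5,23); (1,10,0);
  (1,10,15); (1,10,1); (1,10,11); (1,10,16); (1,10,21); (1,10,7); (1,10,12);
  (1,10,17); (1,10,22); (1,10,3); (1,10,8); (1,10,18); (1,10,23); (1,15,5);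
  (1,15,15); (1,15,1); (1,15,6); (1,15,16); (1,15,21); (1,15,2); (1,15,7);
  (1,15,12); (1,15,22); (1,15,3); (1,15,8); (1,15,18); (1,15,23); (1,20,5);
  (1,20,20); (1,20,1); (1,20,6); (1,20,11); (1,20,21); (1,20,2); (1,20,12);
  (1,20,17); (1,20,22); (1,20,3); (1,20,8); (1,20,18); (1,20,23); (1,1,0);
  (1,1,5); (1,1,15); (1,1,6); (1,1,2); (1,1,12); (1,1,17); (1,1,22); (1,1,13);
  (1,1,18); (1,1,4); (1,1,14); (1,1,19); (1,1,24); (1,6,5); (1,6,10); (1,6,20);
  (1,6,11); (1,6,2); (1,6,7); (1,6,12); (1,6,17); (1,6,8); (1,6,13); (1,6,4);
  (1,6,9); (1,6,14); (1,6,24); (1,11,0); (1,11,10); (1,11,15); (1,11,16);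
  (1,11,2); (1,11,7); (1,11,17); (1,11,22); (1,11,3); (1,11,8); (1,11,9);
  (1,11,14); (1,11,19); (1,11,24); (1,16,5); (1,16,15); (1,16,20); (1,16,21);
  (1,16,7); (1,16,12); (1,16,17); (1,16,22); (1,16,3); (1,16,23); (1,16,4);
  (1,16,9); (1,16,19); (1,16,24); (1,21,0); (1,21,10); (1,21,20); (1,21,1);
  (1,21,2); (1,21,7); (1,21,12); (1,21,22); (1,21,18); (1,21,23); (1,21,4);
  (1,21,9); (1,21,14); (1,21,19); (1,2,0); (1,2,5); (1,2,15); (1,2,20);
  (1,2,1); (1,2,21); (1,2,12); (1,2,17); (1,2,13); (1,2,18); (1,2,4); (1,2,9);
  (1,2,14); (1,2,19); (1,7,0); (1,7,5); (1,7,10); (1,7,15); (1,7,1); (1,7,6);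
  (1,7,17); (1,7,22); (1,7,3); (1,7,23); (1,7,4); (1,7,14); (1,7,19); (1,7,24);
  (1,12,0); (1,12,10); (1,12,15); (1,12,20); (1,12,6); (1,12,11); (1,12,2);
  (1,12,22); (1,12,8); (1,12,13); (1,12,4); (1,12,9); (1,12,14); (1,12,24);
  (1,17,0); (1,17,5); (1,17,10); (1,17,20); (1,17,11); (1,17,16); (1,17,2);
  (1,17,7); (1,17,18); (1,17,23); (1,17,9); (1,17,14); (1,17,19); (1,17,24);
  (1,22,5); (1,22,10); (1,22,15); (1,22,20); (1,22,16); (1,22,21); (1,22,7);
  (1,22,12); (1,22,3); (1,22,8); (1,22,4); (1,22,9); (1,22,19); (1,22,24);
  (1,3,5); (1,3,20); (1,3,1); (1,3,11); (1,3,7); (1,3,17); (1,3,3); (1,3,23);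
  (1,8,5); (1,8,15); (1,8,6); (1,8,21); (1,8,12); (1,8,22); (1,8,3); (1,8,8);
  (1,8,4); (1,8,9); (1,8,14); (1,8,19); (1,8,24); (1,13,0); (1,13,15);
  (1,13,1); (1,13,16); (1,13,2); (1,13,17); (1,13,8); (1,13,13); (1,13,4);
  (1,13,9); (1,13,14); (1,13,19); (1,13,24); (1,18,0); (1,18,10); (1,18,11);
  (1,18,21); (1,18,7); (1,18,22); (1,18,13); (1,18,18); (1,18,4); (1,18,9);
  (1,18,14); (1,18,19); (1,18,24); (1,23,10); (1,23,20); (1,23,6); (1,23,16);
  (1,23,2); (1,23,12); (1,23,18); (1,23,23); (1,4,0); (1,4,5); (1,4,6);
  (1,4,11); (1,4,16); (1,4,21); (1,4,7); (1,4,17); (1,4,3); (1,4,18); (1,4,23);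
  (1,4,4); (1,4,9); (1,4,24); (1,9,0); (1,9,20); (1,9,1); (1,9,6); (1,9,11);
  (1,9,16); (1,9,2); (1,9,17); (1,9,3); (1,9,8); (1,9,23); (1,9,4); (1,9,9);
  (1,9,14); (1,14,15); (1,14,20); (1,14,1); (1,14,6); (1,14,11); (1,14,21);
  (1,14,2); (1,14,12); (1,14,3); (1,14,8); (1,14,13); (1,14,9); (1,14,14);
  (1,14,19); (1,19,10); (1,19,15); (1,19,1); (1,19,6); (1,19,16); (1,19,21);
  (1,19,12); (1,19,22); (1,19,8); (1,19,13); (1,19,18); (1,19,14); (1,19,19);
  (1,19,24); (1,24,5); (1,24,10); (1,24,1); (1,24,11); (1,24,16); (1,24,21);
  (1,24,7); (1,24,22); (1,24,13); (1,24,18); (1,24,23); (1,24,4); (1,24,19);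
  (1,24,24)].

Definition arc_S5_455 : seq (nat * nat * nat) := [::
  (0,5,1); (0,10,1); (0,20,1); (0,1,0); (0,1,5); (0,1,10); (0,1,1); (0,1,11);
  (0,1,16); (0,1,3); (0,1,18); (0,1,9); (0,1,14); (0,1,19); (5,0,1); (5,5,1);
  (5,15,1); (5,1,0); (5,1,15); (5,1,20); (5,1,1); (5,1,11); (5,1,16); (5,1,2);
  (5,1,7); (5,1,12); (5,1,17); (5,1,22); (5,1,8); (5,1,18); (5,1,9); (5,1,14);
  (5,1,19); (10,0,1); (10,10,1); (10,20,1); (10,1,5); (10,1,10); (10,1,15);
  (10,1,1); (10,1,11); (10,1,16); (10,1,2); (10,1,7); (10,1,12); (10,1,17);
  (10,1,22); (10,1,8); (10,1,23); (10,1,9); (10,1,14); (10,1,19); (15,5,1);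
  (15,15,1); (15,20,1); (15,1,0); (15,1,5); (15,1,20); (15,1,1); (15,1,11);
  (15,1,16); (15,1,2); (15,1,7); (15,1,12); (15,1,17); (15,1,22); (15,1,13);
  (15,1,23); (15,1,9); (15,1,14); (15,1,19); (20,0,1); (20,10,1); (20,15,1);
  (20,1,10); (20,1,15); (20,1,20); (20,1,1); (20,1,11); (20,1,16); (20,1,2);
  (20,1,7); (20,1,12); (20,1,17); (20,1,22); (20,1,3); (20,1,13); (20,1,9);
  (20,1,14); (20,1,19); (1,0,0); (1,0,15); (1,0,20); (1,0,1); (1,0,6);
  (1,0,11); (1,0,21); (1,0,2); (1,0,7); (1,0,12); (1,0,17); (1,0,13); (1,0,4);
  (1,0,9); (1,0,19); (1,0,24); (1,5,10); (1,5,15); (1,5,20); (1,5,1); (1,5,6);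
  (1,5,16); (1,5,21); (1,5,7); (1,5,12); (1,5,17); (1,5,22); (1,5,3); (1,5,9);
  (1,5,14); (1,5,19); (1,5,24); (1,10,5); (1,10,10); (1,10,15); (1,10,1);
  (1,10,11); (1,10,16); (1,10,21); (1,10,2); (1,10,12); (1,10,17); (1,10,22);
  (1,10,18); (1,10,4); (1,10,9); (1,10,14); (1,10,24); (1,15,0); (1,15,5);
  (1,15,10); (1,15,6); (1,15,11); (1,15,16); (1,15,21); (1,15,2); (1,15,7);
  (1,15,17); (1,15,22); (1,15,8); (1,15,4); (1,15,14); (1,15,19); (1,15,24);
  (1,20,0); (1,20,5); (1,20,20); (1,20,1); (1,20,6); (1,20,11); (1,20,16);
  (1,20,2); (1,20,7); (1,20,12); (1,20,22); (1,20,23); (1,20,4); (1,20,9);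
  (1,20,14); (1,20,19); (1,1,5); (1,1,10); (1,1,15); (1,1,20); (1,1,6);
  (1,1,21); (1,1,2); (1,1,7); (1,1,12); (1,1,17); (1,1,8); (1,1,18); (1,1,23);
  (1,1,14); (1,1,19); (1,1,24); (1,6,0); (1,6,5); (1,6,10); (1,6,20); (1,6,11);
  (1,6,21); (1,6,7); (1,6,12); (1,6,17); (1,6,22); (1,6,8); (1,6,18); (1,6,23);
  (1,6,9); (1,6,14); (1,6,19); (1,11,0); (1,11,10); (1,11,15); (1,11,20);
  (1,11,1); (1,11,11); (1,11,2); (1,11,12); (1,11,17); (1,11,22); (1,11,8);
  (1,11,18); (1,11,23); (1,11,4); (1,11,9); (1,11,14); (1,16,0); (1,16,5);
  (1,16,10); (1,16,15); (1,16,1); (1,16,16); (1,16,2); (1,16,7); (1,16,17);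
  (1,16,22); (1,16,8); (1,16,18); (1,16,23); (1,16,4); (1,16,9); (1,16,24);
  (1,21,0); (1,21,5); (1,21,15); (1,21,20); (1,21,6); (1,21,16); (1,21,2);
  (1,21,7); (1,21,12); (1,21,22); (1,21,8); (1,21,18); (1,21,23); (1,21,4);
  (1,21,19); (1,21,24); (1,2,6); (1,2,11); (1,2,16); (1,2,21); (1,2,2);
  (1,2,17); (1,2,22); (1,2,8); (1,2,13); (1,2,19); (1,2,24); (1,7,0); (1,7,5);
  (1,7,10); (1,7,15); (1,7,20); (1,7,1); (1,7,6); (1,7,16); (1,7,21); (1,7,2);
  (1,7,7); (1,7,22); (1,7,8); (1,7,13); (1,7,9); (1,7,14); (1,12,0); (1,12,5);
  (1,12,10); (1,12,15); (1,12,20); (1,12,1); (1,12,6); (1,12,11); (1,12,16);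
  (1,12,2); (1,12,7); (1,12,12); (1,12,8); (1,12,13); (1,12,4); (1,12,24);
  (1,17,0); (1,17,5); (1,17,10); (1,17,15); (1,17,20); (1,17,1); (1,17,11);
  (1,17,16); (1,17,21); (1,17,7); (1,17,12); (1,17,17); (1,17,8); (1,17,13);
  (1,17,14); (1,17,19); (1,22,0); (1,22,5); (1,22,10); (1,22,15); (1,22,20);
  (1,22,1); (1,22,6); (1,22,11); (1,22,21); (1,22,12); (1,22,17); (1,22,22);
  (1,22,8); (1,22,13); (1,22,4); (1,22,9); (1,3,0); (1,3,5); (1,3,15);
  (1,3,20); (1,3,6); (1,3,11); (1,3,16); (1,3,21); (1,3,2); (1,3,17); (1,3,13);
  (1,3,23); (1,3,4); (1,3,9); (1,3,14); (1,3,19); (1,8,0); (1,8,10); (1,8,15);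
  (1,8,20); (1,8,1); (1,8,11); (1,8,16); (1,8,21); (1,8,7); (1,8,17); (1,8,13);
  (1,8,23); (1,8,4); (1,8,9); (1,8,14); (1,8,19); (1,13,5); (1,13,10);
  (1,13,15); (1,13,20); (1,13,1); (1,13,6); (1,13,16); (1,13,21); (1,13,7);
  (1,13,22); (1,13,13); (1,13,23); (1,13,4); (1,13,9); (1,13,14); (1,13,19);
  (1,18,0); (1,18,5); (1,18,10); (1,18,15); (1,18,1); (1,18,6); (1,18,11);
  (1,18,21); (1,18,12); (1,18,22); (1,18,13); (1,18,23); (1,18,4); (1,18,9);
  (1,18,14); (1,18,19); (1,23,0); (1,23,5); (1,23,10); (1,23,20); (1,23,1);
  (1,23,6); (1,23,11); (1,23,16); (1,23,2); (1,23,12); (1,23,13); (1,23,23);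
  (1,23,4); (1,23,9); (1,23,14); (1,23,19); (1,4,0); (1,4,5); (1,4,10);
  (1,4,15); (1,4,20); (1,4,1); (1,4,21); (1,4,3); (1,4,8); (1,4,13); (1,4,18);
  (1,4,23); (1,4,4); (1,4,9); (1,4,14); (1,4,19); (1,4,24); (1,9,16); (1,9,21);
  (1,9,2); (1,9,7); (1,9,12); (1,9,17); (1,9,22); (1,14,11); (1,14,16);
  (1,14,2); (1,14,7); (1,14,12); (1,14,17); (1,14,22); (1,14,3); (1,14,8);
  (1,14,13); (1,14,18); (1,14,23); (1,14,4); (1,14,9); (1,14,14); (1,14,19);
  (1,14,24); (1,19,6); (1,19,11); (1,24,1); (1,24,6); (1,24,2); (1,24,7);
  (1,24,12); (1,24,17); (1,24,22)].

Theorem theorem3p10 :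
  [/\ (exists A, @proj_arc Z25 A 425 18), (exists A, @proj_arc Z25 A 455 19),
      (exists A, @proj_arc S5 A 425 18) & (exists A, @proj_arc S5 A 455 19)].
Proof.
split.
- by apply: (proj_arc_base5 (V := arc_Z25_425) mem_base5_Z25); vm_compute.
- by apply: (proj_arc_base5 (V := arc_Z25_455) mem_base5_Z25); vm_compute.
- by apply: (proj_arc_base5 (V := arc_S5_425) mem_base5_S5); vm_compute.
- by apply: (proj_arc_base5 (V := arc_S5_455) mem_base5_S5); vm_compute.
Qed.
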